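(* Let $G=(V,E)$ be a graph with adjacency matrix $A$, let $k$ be a positive integer and $C=\{1,\dots,k\}$. Then $G$ is $k$-colorable if and only if there exists $x\in\{0,1\}^{V\times C}$ such that $\sum_{j\in C}x_{ij}=1$ for all $i\in V$, and $\sum_{i\in V}A_{pi}x_{ij}\le |E|(1-x_{pj})$ for all $p\in V$ and $j\in C$. *)

From mathcomp Require Import all_boot all_order.
Set Implicit Arguments. Unset Strict Implicit. Unset Printing Implicit Defensive.

Definition simple_graph (V : finType) (e : rel V) : Prop :=
  symmetric e /\ irreflexive e.

Definition adj (V : finType) (e : rel V) (p i : V) : nat := e p i.

Definition edges (V : finType) (e : rel V) : {set {set V}} :=
  [set s : {set V} | [exists x, exists y, e x y && (s == [set x; y])]].

(* k-colorability: a coloring with colors in 'I_k (i.e. C = {1..k})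
   giving adjacent vertices different colors. *)
Definition colorable (V : finType) (e : rel V) (k : nat) : Prop :=
  exists c : V -> 'I_k, forall x y, e x y -> c x != c y.

From mathcomp Require Import all_boot all_order.

Set Implicit Arguments.
Unset Strict Implicit.
Unset Printing Implicit Defensive.

(* A coloring c corresponds to the indicator x_ij = [c i == j].  The constraint
   with x_pj = 1 says that no neighbour of p has color j; with x_pj = 0 it is
   implied by deg p <= |E|, which holds since p's neighbours i give distinct
   edges {p, i}. *)

Section Degree.

Variables (V : finType) (e : rel V).

Lemma sum_adj_card (p : V) : \sum_(i : V) adj e p i = #|[set i | e p i]|.
Proof.
rewrite -sum1_card [RHS]big_mkcond /=; apply: eq_bigr => i _.
by rewrite /adj inE; case: (e p i).
Qed.

Lemma card_neighbours_le_edges (p : V) :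
  irreflexive e -> #|[set i | e p i]| <= #|edges e|.
Proof.
move=> irr; rewrite -(@card_in_imset _ _ (fun i => [set p; i])).
  apply/subset_leq_card/subsetP => s /imsetP [i]; rewrite inE => epi ->.
  by rewrite inE; apply/existsP; exists p; apply/existsP; exists i; rewrite epi eqxx.
move=> i i'; rewrite !inE => epi _ eq_pi.
have : i \in [set p; i'] by rewrite -eq_pi !inE eqxx orbT.
rewrite !inE => /orP [/eqP ip | /eqP //].
by move: epi; rewrite ip irr.
Qed.

Lemma sum_adj_le_edges (p : V) :
  irreflexive e -> \sum_(i : V) adj e p i <= #|edges e|.
Proof. by move=> irr; rewrite sum_adj_card card_neighbours_le_edges. Qed.

End Degree.

Lemma sum_nat_bool_eq1_exists (I : finType) (b : I -> bool) :
  \sum_(j : I) (b j : nat) = 1 -> exists j, b j.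
Proof.
move=> sum1; apply/existsP; apply: contraT; rewrite negb_exists => /forallP nb.
by move: sum1; rewrite big1 // => j _; rewrite (negPf (nb j)).
Qed.

Section ColoringIndicator.

Variables (V : finType) (e : rel V) (k : nat) (c : V -> 'I_k).

Lemma sum_color_indicator (i : V) : \sum_(j < k) ((c i == j) : nat) = 1.
Proof.
rewrite (bigD1 (c i)) //= eqxx big1 // => j /negPf.
by rewrite eq_sym => ->.
Qed.

Lemma color_indicator_constraint (p : V) (j : 'I_k) :
  irreflexive e -> (forall x y, e x y -> c x != c y) ->
  \sum_(i : V) adj e p i * (c i == j) <= #|edges e| * (1 - (c p == j)).
Proof.
move=> irr proper; have [<- | _] := eqVneq (c p) j.
  rewrite subnn muln0 leqn0 sum_nat_eq0; apply/forallP => i; apply/implyP => _.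
  rewrite /adj; case epi: (e p i) => //=.
  by move: (proper _ _ epi); rewrite eq_sym => /negPf ->.
rewrite subn0 muln1 (leq_trans _ (sum_adj_le_edges p irr)) // leq_sum // => i _.
by case: (c i == j); rewrite ?muln1 ?muln0.
Qed.

End ColoringIndicator.

Lemma constraint_no_neighbour_same_color (V : finType) (e : rel V) (k : nat)
    (x : V -> 'I_k -> bool) (p i : V) (j : 'I_k) :
  \sum_(i : V) adj e p i * x i j <= #|edges e| * (1 - x p j) ->
  x p j -> e p i -> ~~ x i j.
Proof.
move=> + xpj epi; rewrite xpj subnn muln0 leqn0 sum_nat_eq0.
by move=> /forallP /(_ i); rewrite /adj epi mul1n; case: (x i j).
Qed.

Theorem lemma12 (V : finType) (e : rel V) (k : nat) :
  simple_graph e -> 0 < k ->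
  colorable e k <->
  exists x : V -> 'I_k -> bool,
    (forall i : V, \sum_(j < k) (x i j : nat) = 1) /\
    (forall (p : V) (j : 'I_k),
        \sum_(i : V) adj e p i * x i j <= #|edges e| * (1 - x p j)).
Proof.
move=> [_ irr] _; split.
  move=> [c proper]; exists (fun i j => c i == j); split.
    exact: sum_color_indicator.
  by move=> p j; apply: color_indicator_constraint.
move=> [x [row_sum constraint]].
have has_color i : exists j, x i j := sum_nat_bool_eq1_exists (row_sum i).
exists (fun i => xchoose (has_color i)) => a b eab; apply/eqP => same.
have := constraint_no_neighbour_same_color (constraint _ _) (xchooseP (has_color a)) eab.
by rewrite same (xchooseP (has_color b)).
Qed.
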